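(* Let $u,v,w$ be words of length $N$ with $|u|_0=|v|_0=|w|_0=:N_0$ and $N_1:=N-N_0$. For every perfect matching $M$ of $G^N_o(u,w)$: $o_U(M)+o_D(M)+o_R(M)+o_L(M)=N(N-1)/2+N_1$, $\quad o_L(M)+o_D(M)=\mathrm{d}(w)-\mathrm{d}(u)$, $\quad o_U(M)+o_L(M)=N_0(N_0-1)/2+\mathrm{d}(w)$. For every perfect matching $M$ of $G^N_e(v,w)$: $e_U(M)+e_D(M)+e_R(M)+e_L(M)=N(N-1)/2+N_0$, $\quad e_L(M)+e_U(M)=\mathrm{d}(w)-\mathrm{d}(v)$, $\quad e_D(M)+e_L(M)=N_1(N_1-1)/2+\mathrm{d}(w)$.
   Context: Let $N\ge 1$. $G^N$ is the induced subgraph of the square lattice $\mathbb{Z}^2$ formed by $N$ consecutive, horizontally centred rows having $3,5,\dots,2N+1$ vertices from top to bottom. It is bipartite; vertices of the same colour as the leftmost vertex of each row are called odd, the others even. Let $B_1,\dots,B_N$ be the even vertices of the bottom row, $L_1,\dots,L_N$ the leftmost vertices of the rows, and $R_1,\dots,R_N$ the rightmost vertices of the rows, each family numbered from left to right (so $L_1$ is the leftmost vertex of the bottom row and $R_1$ the rightmost vertex of the top row). Words of length $N$ are $u=u_1\cdots u_N\in\{0,1\}^N$; $|u|_0,|u|_1$ count $0$s and $1$s; $\mathrm{d}(u)$ is the number of pairs $i<j$ with $u_i=1,u_j=0$. $G^N_o(u,w)$ is the induced subgraph of $G^N$ obtained by deleting all $R_i$, all $B_i$ with $w_i=0$, and all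 $L_i$ with $u_i=0$. $G^N_e(v,w)$ is the induced subgraph obtained by deleting all $L_i$, all $B_i$ with $w_i=1$, and all $R_i$ with $v_i=1$. For a perfect matching $M$ of $G^N_o(u,w)$, orient each edge from its odd endpoint to its even endpoint; $o_U(M),o_D(M),o_L(M),o_R(M)$ denote the numbers of edges pointing up, down, left, right respectively. For a perfect matching $M$ of $G^N_e(v,w)$, orient each edge from its even endpoint to its odd endpoint; $e_U(M),e_D(M),e_L(M),e_R(M)$ denote the numbers of edges pointing up, down, left, right. *)

From mathcomp Require Import all_boot all_order all_algebra.
Set Implicit Arguments. Unset Strict Implicit. Unset Printing Implicit Defensive.

(* A vertex of the ambient grid is a pair (r, c) with
   r : 'I_N the row index counted from the TOP (0-based; paper row r+1)
   and c : 'I_(2N+1) the column; the horizontal lattice coordinate is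
   x = c - N (rows are horizontally centred at x = 0).
   Row r (0-based) of G^N consists of the 2(r+1)+1 vertices with
   |x| <= r+1, i.e.  N <= c + r + 1  and  c <= N + r + 1. *)
Definition vtx (N : nat) := ('I_N * 'I_(2 * N + 1))%type.

Definition inG (N : nat) (p : vtx N) : bool :=
  (N <= p.2 + p.1 + 1) && (p.2 <= N + p.1 + 1).

Definition adj (N : nat) (a b : vtx N) : bool :=
  ((a.1 == b.1 :> nat) && ((a.2.+1 == b.2 :> nat) || (b.2.+1 == a.2 :> nat)))
  || ((a.2 == b.2 :> nat) && ((a.1.+1 == b.1 :> nat) || (b.1.+1 == a.1 :> nat))).

(* "odd" vertices: same colour as the leftmost vertex of each row,
   i.e. x + (paper row index) = (c - N) + (r + 1) is even. *)
Definition is_odd_v (N : nat) (p : vtx N) : bool := ~~ odd (p.2 + p.1 + N + 1).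

(* Distinguished vertices, indexed by j : 'I_N (paper index i = j+1). *)
(* B_i : i-th even vertex (from the left) of the bottom row: x = -N+2i-1 *)
Definition Bv (N : nat) (j : 'I_N) (p : vtx N) : bool :=
  (p.1 == N.-1 :> nat) && (p.2 == j.*2.+1 :> nat).
(* L_i : leftmost vertex of paper row N+1-i *)
Definition Lv (N : nat) (j : 'I_N) (p : vtx N) : bool :=
  (p.1 == N.-1 - j :> nat) && (p.2 == j :> nat).
(* R_i : rightmost vertex of paper row i *)
Definition Rv (N : nat) (j : 'I_N) (p : vtx N) : bool :=
  (p.1 == j :> nat) && (p.2 == N + j + 1 :> nat).

(* Words of length N : N.-tuple bool, letter i is tnth u j (j = i-1). *)
Definition nzeros (N : nat) (u : N.-tuple bool) : nat := count negb u.
Definition dw (N : nat) (u : N.-tuple bool) : nat :=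
  #|[set p : 'I_N * 'I_N | (p.1 < p.2) && tnth u p.1 && ~~ tnth u p.2]|.

Definition Go_set (N : nat) (u w : N.-tuple bool) : {set vtx N} :=
  [set p : vtx N | inG p
     && [forall j : 'I_N, ~~ Rv j p]
     && [forall j : 'I_N, ~~ (Bv j p && ~~ tnth w j)]
     && [forall j : 'I_N, ~~ (Lv j p && ~~ tnth u j)]].

Definition Ge_set (N : nat) (v w : N.-tuple bool) : {set vtx N} :=
  [set p : vtx N | inG p
     && [forall j : 'I_N, ~~ Lv j p]
     && [forall j : 'I_N, ~~ (Bv j p && tnth w j)]
     && [forall j : 'I_N, ~~ (Rv j p && tnth v j)]].

Definition perfect_matching (N : nat) (S : {set vtx N}) (M : {set {set vtx N}}) : Prop :=
  (forall e, e \in M -> exists a b, [/\ a \in S, b \in S, adj a b & e = [set a; b]])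
  /\ (forall x, x \in S -> #|[set e in M | x \in e]| = 1).

(* Directions of a move a -> b (rows counted from the top). *)
Definition dirU (N : nat) (a b : vtx N) : bool := (b.1.+1 == a.1 :> nat) && (a.2 == b.2 :> nat).
Definition dirD (N : nat) (a b : vtx N) : bool := (a.1.+1 == b.1 :> nat) && (a.2 == b.2 :> nat).
Definition dirL (N : nat) (a b : vtx N) : bool := (a.1 == b.1 :> nat) && (b.2.+1 == a.2 :> nat).
Definition dirR (N : nat) (a b : vtx N) : bool := (a.1 == b.1 :> nat) && (a.2.+1 == b.2 :> nat).

(* number of edges of M pointing in direction dir, when oriented from the
   odd endpoint to the even one (from_odd = true) or from the even endpoint
   to the odd one (from_odd = false) *)
Definition ndir (N : nat) (from_odd : bool) (dir : vtx N -> vtx N -> bool)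
    (M : {set {set vtx N}}) : nat :=
  #|[set e in M | [exists a : vtx N, exists b : vtx N,
       [&& is_odd_v a == from_odd, is_odd_v b == ~~ from_odd,
           e == [set a; b] & dir a b]]]|.

Definition oU N := @ndir N true (@dirU N).
Definition oD N := @ndir N true (@dirD N).
Definition oL N := @ndir N true (@dirL N).
Definition oR N := @ndir N true (@dirR N).
Definition eU N := @ndir N false (@dirU N).
Definition eD N := @ndir N false (@dirD N).
Definition eL N := @ndir N false (@dirL N).
Definition eR N := @ndir N false (@dirR N).

From mathcomp Require Import all_boot all_order all_algebra zify ring.
Set Implicit Arguments. Unset Strict Implicit. Unset Printing Implicit Defensive.
Import GRing.Theory.
Local Open Scope ring_scope.

(* Orient each edge of a perfect matching M of S, giving its tail the sign -1 and
   its head the sign +1.  The number of right minus left edges is then the signed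
   sum of the column coordinates over S, the number of down minus up edges the
   signed sum of the row coordinates, and |S| = 2|M|.  Here S is G^N with some of
   the boundary vertices R_i, B_i, L_i removed: the signs alternate along each
   row of G^N, which makes its signed sums explicit, and the removed vertices
   contribute affine functions of their indices.  The index sums of the letters 0
   (resp. 1) of a word are d(w) plus a binomial coefficient, and the identities
   follow by solving the linear system completed by o_U + o_D + o_L + o_R = |M|. *)

Section Edges.
Variable N : nat.
Implicit Types (a b p : vtx N) (fo : bool) (dir : vtx N -> vtx N -> bool).

Lemma adj_sym a b : adj a b -> adj b a.
Proof.
rewrite /adj; case: a b => [a1 a2] [b1 b2] /=.
move: (a1 : nat) (a2 : nat) (b1 : nat) (b2 : nat) => x1 x2 y1 y2.
by rewrite (eq_sym x1) (eq_sym x2) (orbC (x2.+1 == y2)) (orbC (x1.+1 == y1)).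
Qed.

Lemma adj_is_odd_v a b : adj a b -> is_odd_v b = ~~ is_odd_v a.
Proof.
case: a b => [a1 a2] [b1 b2]; rewrite /adj /is_odd_v /=.
case/orP => /andP [/eqP E /orP [] /eqP F].
all: have : (b2 + b1 + N + 1 = (a2 + a1 + N + 1).+1
             \/ (b2 + b1 + N + 1).+1 = a2 + a1 + N + 1)%N by lia.
all: by case=> [->|<-]; rewrite /= ?negbK.
Qed.

Lemma adj_neq a b : adj a b -> a != b.
Proof. by move=> /adj_is_odd_v; apply: contra_eqN => /eqP ->; case: is_odd_v. Qed.

Definition dir_edge fo dir (e : {set vtx N}) : bool :=
  [exists a, exists b,
     [&& is_odd_v a == fo, is_odd_v b == ~~ fo, e == [set a; b] & dir a b]].

Lemma ndirE fo dir M : ndir fo dir M = (\sum_(e in M) dir_edge fo dir e)%N.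
Proof.
rewrite /ndir -sum1_card big_mkcond [RHS]big_mkcond; apply: eq_bigr => e _.
by rewrite inE; case: (e \in M).
Qed.

Lemma dir_edge_pair fo dir a b : is_odd_v a = fo -> is_odd_v b = ~~ fo ->
  dir_edge fo dir [set a; b] = dir a b.
Proof.
move=> oa ob; apply/existsP/idP => [[a' /existsP [b' /and4P [/eqP oa' /eqP ob' /eqP E d]]]|d].
- have : (a' \in [set a; b]) && (b' \in [set a; b]) by rewrite E !inE !eqxx orbT.
  case/andP; rewrite !inE => /orP [] /eqP Ea /orP [] /eqP Eb; move: oa' ob' d;
  rewrite Ea Eb ?oa ?ob //; case: fo {oa ob} => // -> //.
- by exists a; apply/existsP; exists b; rewrite oa ob !eqxx d.
Qed.

(* [fo] is the parity of the tail of an oriented edge: tails get the sign -1,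
   heads the sign +1. *)
Definition head_sign_at fo (r c : nat) : int :=
  if ~~ odd (c + r + N + 1) == fo then -1 else 1.
Definition head_sign fo p : int := head_sign_at fo p.1 p.2.
Definition colz p : int := (p.2 : nat)%:Z.
Definition rowz p : int := (p.1 : nat)%:Z.

Lemma sum_pair a b (h : vtx N -> int) : a != b ->
  \sum_(p in [set a; b]) h p = h a + h b.
Proof. by move=> ab; rewrite big_setU1 ?inE // big_set1. Qed.

Lemma edge_dir_counts fo a b : adj a b ->
  let e := [set a; b] in
  [/\ (dir_edge fo (@dirU N) e + dir_edge fo (@dirD N) e
       + dir_edge fo (@dirL N) e + dir_edge fo (@dirR N) e = 1)%N,
      (dir_edge fo (@dirR N) e)%:Z - (dir_edge fo (@dirL N) e)%:Z
        = \sum_(p in e) head_sign fo p * colz p &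
      (dir_edge fo (@dirD N) e)%:Z - (dir_edge fo (@dirU N) e)%:Z
        = \sum_(p in e) head_sign fo p * rowz p].
Proof.
wlog oa : a b / is_odd_v a = fo => [hwlog ab|ab e].
  have [oa|oa] := eqVneq (is_odd_v a) fo; first exact: hwlog oa ab.
  have ob : is_odd_v b = fo.
    by rewrite (adj_is_odd_v ab); move: oa; case: is_odd_v; case: (fo).
  by rewrite setUC; exact: hwlog ob (adj_sym ab).
have ob : is_odd_v b = ~~ fo by rewrite (adj_is_odd_v ab) oa.
rewrite /e !dir_edge_pair // !sum_pair ?adj_neq //.
rewrite /head_sign /head_sign_at -/(is_odd_v a) -/(is_odd_v b) oa ob eqxx.
have -> : (~~ fo == fo) = false by case: fo {oa ob}.
move: ab; rewrite /adj /dirU /dirD /dirL /dirR /colz /rowz.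
case: a b {e oa ob} => [a1 a2] [b1 b2] /=.
move: (a1 : nat) (a2 : nat) (b1 : nat) (b2 : nat) => x1 x2 y1 y2.
by repeat (case: eqP => /= ?); split; lia.
Qed.

Lemma perfect_matching_sum (S : {set vtx N}) M (h : vtx N -> int) :
  perfect_matching S M -> \sum_(p in S) h p = \sum_(e in M) \sum_(p in e) h p.
Proof.
case=> edgeM coverS.
have -> : \sum_(p in S) h p = \sum_(p in S) \sum_(e in M | p \in e) h p.
  apply: eq_bigr => p pS.
  rewrite (eq_bigl (fun e => e \in [set e in M | p \in e])); last by move=> e; rewrite inE.
  by rewrite sumr_const coverS.
rewrite (exchange_big_dep (mem M)) //=; last by move=> ? ? _ /andP [].
apply: eq_bigr => e eM; apply: eq_bigl => p; rewrite eM /=.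
have [a [b [aS bS _ ->]]] := edgeM e eM.
rewrite !inE; have [->|_] := eqVneq p a; first by rewrite aS.
by have [->|_] := eqVneq p b; rewrite ?bS ?andbF.
Qed.

Lemma perfect_matching_moments fo (S : {set vtx N}) M : perfect_matching S M ->
 [/\ (ndir fo (@dirU N) M + ndir fo (@dirD N) M + ndir fo (@dirL N) M
      + ndir fo (@dirR N) M = #|M|)%N,
     #|S|%:Z = 2 * #|M|%:Z,
     (ndir fo (@dirR N) M)%:Z - (ndir fo (@dirL N) M)%:Z
       = \sum_(p in S) head_sign fo p * colz p &
     (ndir fo (@dirD N) M)%:Z - (ndir fo (@dirU N) M)%:Z
       = \sum_(p in S) head_sign fo p * rowz p].
Proof.
move=> pm; have [edgeM _] := pm.
have edgeE e : e \in M -> exists a b, adj a b /\ e = [set a; b].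
  by move=> /edgeM [a [b [_ _ h ->]]]; exists a, b.
split.
- rewrite !ndirE -!big_split /= -sum1_card; apply: eq_bigr => e /edgeE [a [b [h ->]]].
  by case: (edge_dir_counts fo h).
- rewrite -[#|S|]sum1_card -[#|M|]sum1_card -!natz !natr_sum (perfect_matching_sum _ pm).
  rewrite mulr_sumr; apply: eq_bigr => e /edgeE [a [b [h ->]]].
  by rewrite sum_pair ?adj_neq.
- rewrite (perfect_matching_sum _ pm) !ndirE -!natz !natr_sum -sumrB.
  apply: eq_bigr => e /edgeE [a [b [h ->]]].
  by case: (edge_dir_counts fo h) => _ <- _; rewrite !natz.
- rewrite (perfect_matching_sum _ pm) !ndirE -!natz !natr_sum -sumrB.
  apply: eq_bigr => e /edgeE [a [b [h ->]]].
  by case: (edge_dir_counts fo h) => _ _ <-; rewrite !natz.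
Qed.

End Edges.

Lemma sum_setU_disjoint (T : finType) (A B : {set T}) (f : T -> int) :
  [disjoint A & B] -> \sum_(p in A :|: B) f p = \sum_(p in A) f p + \sum_(p in B) f p.
Proof. by move=> dAB; rewrite -bigU //; apply: eq_bigl => p; rewrite inE. Qed.

Lemma sum_setD_sub (T : finType) (A B : {set T}) (f : T -> int) :
  B \subset A -> \sum_(p in A :\: B) f p = \sum_(p in A) f p - \sum_(p in B) f p.
Proof. by move=> BA; rewrite [X in _ = X - _](big_setID B) (setIidPr BA) addrC addKr. Qed.

Section BoundaryVertices.
Variable N : nat.
Implicit Types (i j : 'I_N) (p : vtx N).

Lemma Rcol_lt j : (N + j + 1 < 2 * N + 1)%N. Proof. have := ltn_ord j; lia. Qed.
Lemma Brow_lt j : (N.-1 < N)%N. Proof. have := ltn_ord j; lia. Qed.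
Lemma Bcol_lt j : (j.*2.+1 < 2 * N + 1)%N. Proof. have := ltn_ord j; rewrite -muln2; lia. Qed.
Lemma Lrow_lt j : (N.-1 - j < N)%N. Proof. have := ltn_ord j; lia. Qed.
Lemma Lcol_lt j : (j < 2 * N + 1)%N. Proof. have := ltn_ord j; lia. Qed.

Definition Rpt j : vtx N := (j, Ordinal (Rcol_lt j)).
Definition Bpt j : vtx N := (Ordinal (Brow_lt j), Ordinal (Bcol_lt j)).
Definition Lpt j : vtx N := (Ordinal (Lrow_lt j), Ordinal (Lcol_lt j)).

Lemma RvE j p : Rv j p = (p == Rpt j).
Proof. by case: p => a b; rewrite /Rv xpair_eqE. Qed.
Lemma BvE j p : Bv j p = (p == Bpt j).
Proof. by case: p => a b; rewrite /Bv xpair_eqE. Qed.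
Lemma LvE j p : Lv j p = (p == Lpt j).
Proof. by case: p => a b; rewrite /Lv xpair_eqE. Qed.

Lemma Rpt_inj : injective Rpt.
Proof. by move=> i j /(congr1 fst). Qed.
Lemma Bpt_inj : injective Bpt.
Proof. by move=> i j /(congr1 (fun p => nat_of_ord p.2)) /= E; apply/val_inj => /=; lia. Qed.
Lemma Lpt_inj : injective Lpt.
Proof. by move=> i j /(congr1 (fun p => nat_of_ord p.2)) /= E; apply/val_inj. Qed.

Lemma Rpt_neq_Bpt i j : Rpt i != Bpt j.
Proof.
apply/negP => /eqP E.
move: (congr1 (fun p => nat_of_ord p.1) E) (congr1 (fun p => nat_of_ord p.2) E) => /=.
by have := ltn_ord j; rewrite -muln2; lia.
Qed.
Lemma Rpt_neq_Lpt i j : Rpt i != Lpt j.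
Proof. by apply/negP => /eqP /(congr1 (fun p => nat_of_ord p.2)) /=; have := ltn_ord j; lia. Qed.
Lemma Bpt_neq_Lpt i j : Bpt i != Lpt j.
Proof.
apply/negP => /eqP E.
move: (congr1 (fun p => nat_of_ord p.1) E) (congr1 (fun p => nat_of_ord p.2) E) => /=.
by have := ltn_ord i; have := ltn_ord j; rewrite -muln2; lia.
Qed.

Definition Gvert : {set vtx N} := [set p | inG p].

Definition Gminus (P Q R : pred 'I_N) : {set vtx N} :=
  Gvert :\: ([set Rpt j | j in P] :|: [set Bpt j | j in Q] :|: [set Lpt j | j in R]).

Lemma forall_notin_imset (V : 'I_N -> pred (vtx N)) (F : 'I_N -> vtx N)
    (P : pred 'I_N) p :
  (forall j, V j p = (p == F j)) ->
  [forall j, ~~ (V j p && P j)] = (p \notin [set F j | j in P]).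
Proof.
move=> VE; apply/forallP/negP => [h /imsetP [j Pj E]|h j].
  by move: (h j); rewrite VE E eqxx => /negP[]; exact: Pj.
by rewrite VE; apply/negP => /andP [/eqP E Pj]; apply: h; apply/imsetP; exists j.
Qed.

Lemma boundary_sub_Gvert (P Q R : pred 'I_N) :
  [set Rpt j | j in P] :|: [set Bpt j | j in Q] :|: [set Lpt j | j in R] \subset Gvert.
Proof.
rewrite !subUset -!andbA; apply/and3P; split; apply/subsetP => _ /imsetP [j _ ->];
by rewrite inE /inG /=; have := ltn_ord j; rewrite -?muln2; lia.
Qed.

Lemma sum_Gminus (P Q R : pred 'I_N) (f : vtx N -> int) :
  \sum_(p in Gminus P Q R) f p = \sum_(p in Gvert) f p - \sum_(j in P) f (Rpt j)
    - \sum_(j in Q) f (Bpt j) - \sum_(j in R) f (Lpt j).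
Proof.
have dRB : [disjoint [set Rpt j | j in P] & [set Bpt j | j in Q]].
  rewrite -setI_eq0; apply/eqP/setP => x; rewrite inE in_set0.
  apply/negbTE/andP => -[/imsetP [i _ ->] /imsetP [j _ /eqP]].
  by rewrite (negPf (Rpt_neq_Bpt i j)).
have dRBL : [disjoint [set Rpt j | j in P] :|: [set Bpt j | j in Q] & [set Lpt j | j in R]].
  rewrite -setI_eq0; apply/eqP/setP => x; rewrite inE in_set0.
  apply/negbTE/andP => -[/setUP [] /imsetP [i _ ->] /imsetP [j _ /eqP]].
    by rewrite (negPf (Rpt_neq_Lpt i j)).
  by rewrite (negPf (Bpt_neq_Lpt i j)).
rewrite sum_setD_sub ?boundary_sub_Gvert // !sum_setU_disjoint //.
rewrite (big_imset _ (in2W Rpt_inj)) (big_imset _ (in2W Bpt_inj)) (big_imset _ (in2W Lpt_inj)).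
by rewrite !opprD !addrA.
Qed.

End BoundaryVertices.

Lemma Go_setE N (u w : N.-tuple bool) :
  Go_set u w = Gminus predT (fun j => ~~ tnth w j) (fun j => ~~ tnth u j).
Proof.
apply/setP => p; rewrite !inE (forall_notin_imset _ (fun j => BvE j p)).
rewrite (forall_notin_imset _ (fun j => LvE j p)) !negb_or.
have -> : [forall j, ~~ Rv j p] = (p \notin [set Rpt j | j in predT]).
  by rewrite -(forall_notin_imset _ (fun j => RvE j p)); apply: eq_forallb => j; rewrite andbT.
by case: inG; rewrite /= ?andbT ?andbF.
Qed.

Lemma Ge_setE N (v w : N.-tuple bool) :
  Ge_set v w = Gminus (tnth v) (tnth w) predT.
Proof.
apply/setP => p; rewrite !inE (forall_notin_imset _ (fun j => BvE j p)).
rewrite (forall_notin_imset _ (fun j => RvE j p)) !negb_or.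
have -> : [forall j, ~~ Lv j p] = (p \notin [set Lpt j | j in predT]).
  by rewrite -(forall_notin_imset _ (fun j => LvE j p)); apply: eq_forallb => j; rewrite andbT.
case: inG; rewrite /= ?andbT ?andbF //.
by rewrite andbC (andbC (p \notin [set Lpt j | j in predT])) andbA.
Qed.

Lemma sum_alt k : \sum_(i < k.*2.+1) (-1) ^+ i.+1 = -1 :> int.
Proof.
elim: k => [|k IH]; first by rewrite big_ord1.
have ev : (-1) ^+ k.*2 = 1 :> int by rewrite -signr_odd odd_double.
by rewrite doubleS big_ord_recr big_ord_recr /= IH !exprS ev; ring.
Qed.

Lemma sum_alt_id k : \sum_(i < k.*2.+1) (-1) ^+ i.+1 * (i : nat)%:Z = - k%:Z.
Proof.
elim: k => [|k IH]; first by rewrite big_ord1 mulr0.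
have ev : (-1) ^+ k.*2 = 1 :> int by rewrite -signr_odd odd_double.
rewrite doubleS big_ord_recr big_ord_recr /= IH !exprS ev.
by rewrite -(addn1 k) PoszD; ring.
Qed.

Definition parity_sign (fo : bool) : int := if fo then 1 else -1.

Section GridSums.
Variable N : nat.
Implicit Types (fo : bool) (j : 'I_N) (P Q R : pred 'I_N).

Lemma sum_Gvert (g : nat -> nat -> int) :
  \sum_(p in Gvert N) g p.1 p.2
  = \sum_(r < N) \sum_(i < (r : nat).+1.*2.+1) g r (N - r.+1 + i)%N.
Proof.
transitivity (\sum_(r < N) \sum_(c < 2 * N + 1 | inG ((r, c) : vtx N)) g r c).
  by rewrite pair_big_dep; apply: eq_bigl => -[r c]; rewrite inE.
apply: eq_bigr => r _; have := ltn_ord r => hr.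
transitivity (\sum_((N - r.+1)%N <= c < (N + r.+2)%N) g r c).
  rewrite big_geq_mkord (big_ord_widen_cond (2 * N + 1)); last lia.
  by apply: eq_bigl => c; rewrite /inG /=; apply/andP/andP => -[h1 h2]; split; lia.
rewrite -{1}(add0n (N - r.+1)%N) big_addn big_mkord (_ : (_ - _)%N = (r.+1).*2.+1)%N;
  last by rewrite -muln2; lia.
by apply: eq_bigr => i _; rewrite addnC.
Qed.

Lemma head_sign_row fo (r i : nat) : (r < N)%N ->
  head_sign_at N fo r (N - r.+1 + i) = parity_sign fo * (-1) ^+ i.+1.
Proof.
move=> hr; rewrite /head_sign_at (_ : (N - r.+1 + i + r + N + 1 = N.*2 + i)%N);
  last by rewrite -muln2; lia.
rewrite oddD odd_double -signr_odd /=.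
by case: fo; case: odd; rewrite /= ?expr0 ?expr1 ?mul1r ?mulN1r ?opprK.
Qed.

Lemma sum_Gvert_one : \sum_(p in Gvert N) 1 = N%:Z * (N%:Z + 2).
Proof.
have := sum_Gvert (fun _ _ => 1) => /= ->.
under eq_bigr => r _ do rewrite sumr_const card_ord.
elim: N => [|n IH]; first by rewrite big_ord0.
by rewrite big_ord_recr /= IH natz -muln2; lia.
Qed.

Lemma sum_Gvert_col fo :
  \sum_(p in Gvert N) head_sign fo p * colz p = - parity_sign fo * (N%:Z * N%:Z).
Proof.
have := sum_Gvert (fun r c => head_sign_at N fo r c * c%:Z) => /= ->.
rewrite (eq_bigr (fun _ => - parity_sign fo * N%:Z)); last first.
  move=> r _; have hr := ltn_ord r.
  under eq_bigr => i _ do rewrite head_sign_row // PoszD.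
  rewrite (eq_bigr (fun i : 'I_(r.+1).*2.+1 => parity_sign fo *
     ((N - r.+1)%N%:Z * (-1) ^+ i.+1 + (-1) ^+ i.+1 * (i : nat)%:Z))); last by move=> i _; ring.
  rewrite -mulr_sumr big_split /= -mulr_sumr sum_alt sum_alt_id.
  have -> : N%:Z = (N - r.+1)%N%:Z + r.+1%:Z by rewrite -PoszD; congr Posz; lia.
  ring.
by rewrite sumr_const card_ord -mulr_natr natz mulrA.
Qed.

Lemma sum_Gvert_row fo :
  \sum_(p in Gvert N) head_sign fo p * rowz p = - parity_sign fo * \sum_(r < N) (r : nat)%:Z.
Proof.
have := sum_Gvert (fun r c => head_sign_at N fo r c * r%:Z) => /= ->.
rewrite mulr_sumr; apply: eq_bigr => r _; have hr := ltn_ord r.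
under eq_bigr => i _ do rewrite head_sign_row //.
by rewrite -mulr_suml -mulr_sumr sum_alt; ring.
Qed.

Definition idx_sum (P : pred 'I_N) : int := \sum_(j in P) (j : nat)%:Z.

Lemma sum_affine P (F : 'I_N -> int) a b : (forall j, F j = a * (j : nat)%:Z + b) ->
  \sum_(j in P) F j = a * idx_sum P + b * #|P|%:Z.
Proof.
move=> FE; rewrite (eq_bigr _ (fun j _ => FE j)) big_split /= -mulr_sumr.
by rewrite sumr_const -mulr_natr natz.
Qed.

Lemma head_sign_Rpt fo j : head_sign fo (Rpt j) = - parity_sign fo.
Proof.
rewrite /head_sign /head_sign_at /= (_ : (N + j + 1 + j + N + 1 = (N + j + 1).*2)%N).
  by rewrite odd_double; case: fo.
by rewrite -muln2; lia.
Qed.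

Lemma head_sign_Bpt fo j : head_sign fo (Bpt j) = parity_sign fo.
Proof.
rewrite /head_sign /head_sign_at /= (_ : (j.*2 + N.-1 + N + 1 = (j + N).*2)%N).
  by rewrite /= odd_double; case: fo.
by have := ltn_ord j; rewrite -!muln2; lia.
Qed.

Lemma head_sign_Lpt fo j : head_sign fo (Lpt j) = - parity_sign fo.
Proof.
rewrite /head_sign /head_sign_at /= (_ : (j + (N.-1 - j) + N + 1 = N.*2)%N).
  by rewrite odd_double; case: fo.
by have := ltn_ord j; rewrite -!muln2; lia.
Qed.

Lemma Gminus_moments fo P Q R (s := parity_sign fo) :
  [/\ #|Gminus P Q R|%:Z = N%:Z * (N%:Z + 2) - #|P|%:Z - #|Q|%:Z - #|R|%:Z,
      \sum_(p in Gminus P Q R) head_sign fo p * colz p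
        = s * (idx_sum P + (N%:Z + 1) * #|P|%:Z - 2 * idx_sum Q - #|Q|%:Z + idx_sum R
               - N%:Z * N%:Z) &
      \sum_(p in Gminus P Q R) head_sign fo p * rowz p
        = s * (idx_sum P - (N%:Z - 1) * #|Q|%:Z + (N%:Z - 1) * #|R|%:Z - idx_sum R
               - idx_sum predT)].
Proof.
split.
- have := sum_Gminus P Q R (fun _ => 1).
  by rewrite sum_Gvert_one !sumr_const !natz => ->.
- rewrite sum_Gminus sum_Gvert_col.
  rewrite (@sum_affine P _ (- s) (- s * (N%:Z + 1))); last first.
    by move=> j; rewrite head_sign_Rpt /colz /= !PoszD; ring.
  rewrite (@sum_affine Q _ (2 * s) s); last first.
    by move=> j; rewrite head_sign_Bpt /colz /= -muln2 -addn1 PoszD PoszM; ring.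
  rewrite (@sum_affine R _ (- s) 0); last by move=> j; rewrite head_sign_Lpt /colz /=; ring.
  ring.
- rewrite sum_Gminus sum_Gvert_row (_ : \sum_(r < N) _ = idx_sum predT) //.
  rewrite (@sum_affine P _ (- s) 0); last by move=> j; rewrite head_sign_Rpt /rowz /=; ring.
  rewrite (@sum_affine Q _ 0 (s * (N%:Z - 1))); last first.
    move=> j; rewrite head_sign_Bpt /rowz /=; have := ltn_ord j => hj.
    have -> : (N.-1)%:Z = N%:Z - 1 by lia.
    ring.
  rewrite (@sum_affine R _ s (- s * (N%:Z - 1))); last first.
    move=> j; rewrite head_sign_Lpt /rowz /=; have := ltn_ord j => hj.
    have -> : (N.-1 - j)%N%:Z = N%:Z - 1 - (j : nat)%:Z by lia.
    ring.
  ring.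
Qed.

End GridSums.

Lemma double_bin2 n : ('C(n, 2)).*2 = (n * n.-1)%N.
Proof. by rewrite bin2 halfK oddM; case: n => //= n; rewrite andNb subn0. Qed.

Lemma bin2_divn n : ((n * (n - 1)) %/ 2)%N = 'C(n, 2).
Proof. by rewrite bin2 divn2 subn1. Qed.

Lemma sum_ord_ltn n m : (\sum_(i < n) (i < m))%N = minn m n.
Proof.
elim: n => [|n IH]; first by rewrite big_ord0; lia.
by rewrite big_ord_recr /= IH; case: ltnP => h; lia.
Qed.

Section Words.
Variable N : nat.
Implicit Types (t : N.-tuple bool) (A : pred 'I_N).
Local Open Scope nat_scope.

Lemma sum_ord_gtn (i : 'I_N) : \sum_(j < N) (i < j) = N - i.+1.
Proof.
have split_lt : \sum_(j < N) (i < j) + \sum_(j < N) (j < i.+1) = N.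
  rewrite -big_split /= -[RHS]card_ord -sum1_card; apply: eq_bigr => j _.
  by rewrite ltnS; case: leqP.
by move: split_lt; rewrite sum_ord_ltn; have := ltn_ord i; lia.
Qed.

Lemma card_zeros t : #|fun j => ~~ tnth t j| = nzeros t.
Proof.
rewrite /nzeros -[in RHS](map_tnth_enum t) count_map -sum1_count.
by rewrite big_enum_cond /= sum1_card.
Qed.

Lemma card_ones t : #|tnth t| = N - nzeros t.
Proof.
have := cardC (tnth t); rewrite card_ord -card_zeros.
have -> : #|[predC tnth t]| = #|fun j => ~~ tnth t j| by apply: eq_card.
by move/(congr1 (subn^~ #|fun j => ~~ tnth t j|)); rewrite addnK.
Qed.

Definition lt_pairs A := \sum_i \sum_j (A i && A j && (i < j)).

Lemma lt_pairsE A : lt_pairs A = 'C(#|A|, 2).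
Proof.
have cardA : #|A| = \sum_i (A i : nat).
  rewrite -sum1_card big_mkcond; apply: eq_bigr => i _.
  by rewrite -[A i]/(i \in A); case: (i \in A).
have sq : #|A| * #|A| = \sum_i \sum_j (A i && A j : nat).
  rewrite cardA big_distrl /=; apply: eq_bigr => i _.
  by rewrite big_distrr /=; apply: eq_bigr => j _; rewrite mulnb.
have sym : lt_pairs A = \sum_i \sum_j (A i && A j && (j < i)).
  rewrite /lt_pairs exchange_big /=; apply: eq_bigr => i _; apply: eq_bigr => j _.
  by rewrite (andbC (A j)).
have diag : #|A| = \sum_i \sum_j (A i && A j && (i == j)).
  rewrite cardA; apply: eq_bigr => i _; rewrite (bigD1 i) //= eqxx andbb andbT big1 ?addn0 //.
  by move=> j /negPf; rewrite eq_sym => ->; rewrite andbF.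
have : (lt_pairs A).*2 + #|A| = #|A| * #|A|.
  rewrite sq -addnn {2}sym diag -!big_split /=; apply: eq_bigr => i _.
  rewrite -!big_split /=; apply: eq_bigr => j _.
  by case: (A i); case: (A j) => //=; rewrite -val_eqE /=; case: ltngtP.
by move=> h; apply: double_inj; rewrite double_bin2; case: #|A| h => [|n] /=; nia.
Qed.

Lemma dwE t : dw t = \sum_(i < N) \sum_(j < N) ((i < j) && tnth t i && ~~ tnth t j).
Proof.
rewrite /dw -sum1_card big_mkcond /= pair_bigA /=; apply: eq_bigr => p _.
by rewrite inE; case: ifP.
Qed.

Lemma sum_index_zeros t :
  \sum_(j | ~~ tnth t j) j = dw t + 'C(nzeros t, 2).
Proof.
rewrite -card_zeros -lt_pairsE.
rewrite (eq_bigr (fun j : 'I_N => \sum_(i < N) (i < j))); last first.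
  by move=> j _; rewrite sum_ord_ltn; have := ltn_ord j; lia.
rewrite exchange_big dwE -big_split /=; apply: eq_bigr => i _.
rewrite big_mkcond -big_split /=; apply: eq_bigr => j _.
by case: (tnth t i); case: (tnth t j); case: ltnP.
Qed.

Lemma sum_rindex_ones t :
  \sum_(i | tnth t i) (N - i.+1) = dw t + 'C(N - nzeros t, 2).
Proof.
rewrite -card_ones -lt_pairsE dwE -big_split /= big_mkcond; apply: eq_bigr => i _.
rewrite -sum_ord_gtn -big_split /=.
case: (tnth t i); last by rewrite big1 // => j _; rewrite andbF.
by apply: eq_bigr => j _; case: (tnth t j); case: ltnP.
Qed.

End Words.

Section WordIndexSums.
Variable N : nat.
Implicit Types (t : N.-tuple bool) (P : pred 'I_N).

Lemma idx_sumE P : idx_sum P = (\sum_(j in P) (j : nat))%N%:Z.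
Proof. by rewrite /idx_sum -natz natr_sum; apply: eq_bigr => j _; rewrite natz. Qed.

Lemma idx_sum_predT : idx_sum (@predT 'I_N) = 'C(N, 2)%:Z.
Proof. by rewrite idx_sumE -bin2_sum big_mkord. Qed.

Lemma card_predT : #|@predT 'I_N| = N.
Proof. by rewrite -[RHS]card_ord; apply: eq_card. Qed.

Lemma idx_sum_zeros t : idx_sum (fun j => ~~ tnth t j) = (dw t + 'C(nzeros t, 2))%N%:Z.
Proof. by rewrite idx_sumE -sum_index_zeros. Qed.

Lemma idx_sum_ones t :
  idx_sum (tnth t) + (dw t + 'C(N - nzeros t, 2))%N%:Z = ((N - nzeros t) * N.-1)%N%:Z.
Proof.
rewrite idx_sumE -sum_rindex_ones -PoszD -big_split /= -card_ones -sum_nat_const.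
by congr Posz; apply: eq_bigr => j _; have := ltn_ord j; lia.
Qed.

End WordIndexSums.

Lemma double_bin2_int n : 2 * 'C(n, 2)%:Z = n%:Z * (n%:Z - 1).
Proof. by have := double_bin2 n; case: n => [|n] /=; [rewrite bin0n | lia]. Qed.

Lemma direction_system (x y l r m p q : int) :
  x + y + l + r = m -> r - l = m - 2 * p + q -> x - y = q -> y + l = p - q /\ x + l = p.
Proof. lia. Qed.

Lemma odd_matching_counts N (u w : N.-tuple bool) M :
  nzeros u = nzeros w -> perfect_matching (Go_set u w) M ->
  let N0 := nzeros w in
  [/\ (oU M + oD M + oR M + oL M = (N * (N - 1)) %/ 2 + (N - N0))%N,
      (oL M + oD M)%:Z = (dw w)%:Z - (dw u)%:Z &
      (oU M + oL M = (N0 * (N0 - 1)) %/ 2 + dw w)%N].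
Proof.
rewrite Go_setE => hu /(perfect_matching_moments true) [T C X Y] N0.
have [C' X' Y'] := Gminus_moments true predT (fun j => ~~ tnth w j) (fun j => ~~ tnth u j).
rewrite {}C' card_predT !card_zeros in C.
rewrite {}X' idx_sum_predT card_predT !card_zeros !idx_sum_zeros in X.
rewrite {}Y' idx_sum_predT !card_zeros idx_sum_zeros in Y.
rewrite !bin2_divn /oU /oD /oL /oR {}hu -/N0 in C X Y *.
have hN0 : (N0 <= N)%N by rewrite /N0 -card_zeros -[X in (_ <= X)%N]card_ord max_card.
have bN := double_bin2_int N; rewrite /parity_sign !mul1r in X Y.
have hm : #|M|%:Z = 'C(N, 2)%:Z + N%:Z - N0%:Z by lia.
have hRL : (ndir true (@dirR N) M)%:Z - (ndir true (@dirL N) M)%:Z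
    = #|M|%:Z - 2 * (dw w + 'C(N0, 2))%N%:Z + (dw u + 'C(N0, 2))%N%:Z by lia.
have hUD : (ndir true (@dirU N) M)%:Z - (ndir true (@dirD N) M)%:Z
    = (dw u + 'C(N0, 2))%N%:Z by lia.
have := congr1 Posz T; rewrite !PoszD => /direction_system /(_ hRL hUD) [hDL hUL].
split; lia.
Qed.

Lemma even_matching_counts N (v w : N.-tuple bool) M :
  (0 < N)%N -> nzeros v = nzeros w -> perfect_matching (Ge_set v w) M ->
  let N1 := (N - nzeros w)%N in
  [/\ (eU M + eD M + eR M + eL M = (N * (N - 1)) %/ 2 + nzeros w)%N,
      (eL M + eU M)%:Z = (dw w)%:Z - (dw v)%:Z &
      (eD M + eL M = (N1 * (N1 - 1)) %/ 2 + dw w)%N].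
Proof.
rewrite Ge_setE => hN hv /(perfect_matching_moments false) [T C X Y] N1.
have [C' X' Y'] := Gminus_moments false (tnth v) (tnth w) predT.
rewrite {}C' card_predT !card_ones in C.
rewrite {}X' idx_sum_predT !card_ones in X.
rewrite {}Y' idx_sum_predT card_predT !card_ones in Y.
have hv' := idx_sum_ones v; have hw := idx_sum_ones w.
rewrite !bin2_divn /eU /eD /eL /eR {}hv -/N1 in C X Y hv' hw *.
have hN1 : N1%:Z = N%:Z - (nzeros w)%:Z.
  by rewrite subzn // -card_zeros -[X in (_ <= X)%N]card_ord max_card.
have eN : (N.-1)%:Z = N%:Z - 1 by lia.
rewrite PoszM eN in hv' hw.
have bN := double_bin2_int N; rewrite /parity_sign !mulN1r in X Y.
have hm : #|M|%:Z = 'C(N, 2)%:Z + N%:Z - N1%:Z by lia.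
have hRL : (ndir false (@dirR N) M)%:Z - (ndir false (@dirL N) M)%:Z
    = #|M|%:Z - 2 * (dw w + 'C(N1, 2))%N%:Z + (dw v + 'C(N1, 2))%N%:Z by lia.
have hDU : (ndir false (@dirD N) M)%:Z - (ndir false (@dirU N) M)%:Z
    = (dw v + 'C(N1, 2))%N%:Z by lia.
have T' : (ndir false (@dirD N) M)%:Z + (ndir false (@dirU N) M)%:Z
    + (ndir false (@dirL N) M)%:Z + (ndir false (@dirR N) M)%:Z = #|M|%:Z by lia.
have [hUL hDL] := direction_system T' hRL hDU.
split; lia.
Qed.

Theorem theorem3p5 (N : nat) (hN : (0 < N)%N) (u v w : N.-tuple bool)
  (hu : nzeros u = nzeros w) (hv : nzeros v = nzeros w) :
  let N0 := nzeros w in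
  let N1 := (N - N0)%N in
  (forall M : {set {set vtx N}}, perfect_matching (Go_set u w) M ->
     [/\ (oU M + oD M + oR M + oL M = (N * (N - 1)) %/ 2 + N1)%N,
         ((oL M + oD M)%:Z = (dw w)%:Z - (dw u)%:Z) &
         (oU M + oL M = (N0 * (N0 - 1)) %/ 2 + dw w)%N])
  /\
  (forall M : {set {set vtx N}}, perfect_matching (Ge_set v w) M ->
     [/\ (eU M + eD M + eR M + eL M = (N * (N - 1)) %/ 2 + N0)%N,
         ((eL M + eU M)%:Z = (dw w)%:Z - (dw v)%:Z) &
         (eD M + eL M = (N1 * (N1 - 1)) %/ 2 + dw w)%N]).
Proof.
move=> N0 N1; split => M pm; first exact: odd_matching_counts hu pm.
exact: even_matching_counts hN hv pm.
Qed.
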